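(* (1) Any voting method satisfying positive involvement and the Condorcet winner criterion refines the defensible set for linear profiles, i.e. $F(\mathbf{P})\subseteq D(\mathbf{P})$ for every linear profile $\mathbf{P}$. (2) Any voting method satisfying positive involvement and the weak Condorcet winner criterion refines the defensible set for all profiles, i.e. $F(\mathbf{P})\subseteq D(\mathbf{P})$ for every profile $\mathbf{P}$.
   Context: Fix infinite sets $\mathcal{X}$ (alternatives) and $\mathcal{V}$ (voters). A profile $\mathbf{P}$ is a function from a nonempty finite set $V(\mathbf{P})\subseteq\mathcal{V}$ to the set of strict weak orders on a nonempty finite set $X(\mathbf{P})\subseteq\mathcal{X}$; $(x,y)\in\mathbf{P}(i)$ means voter $i$ strictly prefers $x$ to $y$. $\mathbf{P}$ is linear if every $\mathbf{P}(i)$ is a linear order. $\mathrm{Support}_\mathbf{P}(a,b)=|\{i\in V(\mathbf{P}) : (a,b)\in\mathbf{P}(i)\}|$ and $\mathrm{Margin}_\mathbf{P}(x,y)=\mathrm{Support}_\mathbf{P}(x,y)-\mathrm{Support}_\mathbf{P}(y,x)$. A voting method is a function $F$ assigning to each profile $\mathbf{P}$ a nonempty $F(\mathbf{P})\subseteq X(\mathbf{P})$. Defensible set: $D(\mathbf{P})=\{x\in X(\mathbf{P}) : \text{for all } y\in X(\mathbf{P}) \text{ there is } z\in X(\mathbf{P}) \text{ with } \mathrm{Margin}_\mathbf{P}(z,y)\geq\mathrm{Margin}_\mathbf{P}(y,x)\}$. Positive involvement: if $x\in F(\mathbf{P})$ and $\mathbf{P}'$ is obtained from $\mathbf{P}$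 by adding one new voter who ranks $x$ uniquely first, then $x\in F(\mathbf{P}')$. Condorcet winner criterion: if $x$ is a Condorcet winner of $\mathbf{P}$ ($\mathrm{Margin}_\mathbf{P}(x,y)>0$ for all $y\neq x$) then $F(\mathbf{P})=\{x\}$. Weak Condorcet winner criterion: if $\mathbf{P}$ has a weak Condorcet winner (an $x$ with $\mathrm{Margin}_\mathbf{P}(x,y)\geq 0$ for all $y\neq x$), then every element of $F(\mathbf{P})$ is a weak Condorcet winner. *)

From HB Require Import structures.
From mathcomp Require Import all_boot all_algebra.
From mathcomp Require Import finmap.
Set Implicit Arguments. Unset Strict Implicit. Unset Printing Implicit Defensive.
Local Open Scope fset_scope.
Local Open Scope fmap_scope.

Section Voting.
Variables (X V : choiceType).

(* A strict weak order on the finite set A, given as its graph: a set of pairs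
   (a,b) meaning "a strictly preferred to b". *)
Definition strict_weak_order (A : {fset X}) (R : {fset (X * X)}) : Prop :=
  [/\ (forall a b, (a, b) \in R -> a \in A /\ b \in A),
      (forall a, (a, a) \notin R),
      (forall a b c, a \in A -> b \in A -> c \in A ->
          (a, b) \in R -> (b, c) \in R -> (a, c) \in R) &
      (forall a b c, a \in A -> b \in A -> c \in A ->
          (a, c) \in R -> (a, b) \in R \/ (b, c) \in R)].

Definition linear_order (A : {fset X}) (R : {fset (X * X)}) : Prop :=
  strict_weak_order A R /\
  (forall a b, a \in A -> b \in A -> a != b -> (a, b) \in R \/ (b, a) \in R).

Record profile := Profile {
  alts : {fset X};
  ballots : {fmap V -> {fset (X * X)}};
  alts_nonempty : alts != fset0;
  voters_nonempty : domf ballots != fset0;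
  ballots_swo : forall i r, ballots.[? i] = Some r -> strict_weak_order alts r
}.

Definition voters (P : profile) : {fset V} := domf (ballots P).

Definition ballot (P : profile) (i : V) : {fset (X * X)} :=
  odflt fset0 (ballots P).[? i].

Definition linear_profile (P : profile) : Prop :=
  forall i, i \in voters P -> linear_order (alts P) (ballot P i).

Definition support (P : profile) (a b : X) : nat :=
  count (fun i => (a, b) \in ballot P i) (voters P).

Definition margin (P : profile) (a b : X) : int :=
  (support P a b)%:Z - (support P b a)%:Z.

Definition defensible (P : profile) (x : X) : Prop :=
  x \in alts P /\
  forall y, y \in alts P ->
    exists2 z, z \in alts P & (margin P y x <= margin P z y)%R.

Definition voting_method (F : profile -> {fset X}) : Prop :=
  forall P, F P `<=` alts P /\ F P != fset0.

Definition adds_voter_ranking_first (P P' : profile) (i : V) (x : X) : Prop :=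
  [/\ i \notin voters P,
      alts P' = alts P,
      ballots P' = (ballots P).[i <- ballot P' i] &
      (forall y, y \in alts P -> y != x -> (x, y) \in ballot P' i)].

Definition positive_involvement (F : profile -> {fset X}) : Prop :=
  forall P P' i x, x \in F P -> adds_voter_ranking_first P P' i x -> x \in F P'.

Definition condorcet_winner (P : profile) (x : X) : Prop :=
  x \in alts P /\ forall y, y \in alts P -> y != x -> (0 < margin P x y)%R.

Definition weak_condorcet_winner (P : profile) (x : X) : Prop :=
  x \in alts P /\ forall y, y \in alts P -> y != x -> (0 <= margin P x y)%R.

Definition condorcet_winner_criterion (F : profile -> {fset X}) : Prop :=
  forall P x, condorcet_winner P x -> F P = [fset x].

Definition weak_condorcet_winner_criterion (F : profile -> {fset X}) : Prop :=
  forall P, (exists x, weak_condorcet_winner P x) ->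
    forall y, y \in F P -> weak_condorcet_winner P y.

End Voting.

Definition infinite_type (T : choiceType) : Prop :=
  forall s : {fset T}, exists t, t \notin s.

(* Suppose x is chosen at P but is not defensible: some y satisfies
   Margin(z, y) < Margin(y, x) =: m for every z, so in particular m > 0.
   Add m - 1 voters ranking x first, y second and all other alternatives
   tied last; positive involvement keeps x chosen.  Now y beats x by exactly
   1, and beats every other z by m - 1 - Margin(z, y) >= 0, so y is a weak
   Condorcet winner while x is not, contradicting the weak criterion.  For
   linear profiles all margins between distinct alternatives have the parity
   of the number of voters, so Margin(z, y) <= m - 2 and y is even a Condorcet
   winner, contradicting the strong criterion. *)

From Pilot Require Import Defs.
From mathcomp Require Import all_boot all_order all_algebra.
From mathcomp Require Import finmap zify.
From Stdlib Require Import Classical.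
Local Open Scope fset_scope.
Import Order.TTheory GRing.Theory Num.Theory.
Set Implicit Arguments. Unset Strict Implicit. Unset Printing Implicit Defensive.

Section Voting.
Variables X V : choiceType.
Implicit Types (P : profile X V) (A : {fset X}) (b : {fset (X * X)}).

Definition top_two_tier (x y a : X) : nat :=
  if a == x then 0 else if a == y then 1 else 2.

Definition top_two_ballot A (x y : X) : {fset (X * X)} :=
  [fset p in A `*` A | top_two_tier x y p.1 < top_two_tier x y p.2].

Lemma mem_top_two_ballot A x y a c :
  ((a, c) \in top_two_ballot A x y) =
  [&& a \in A, c \in A & top_two_tier x y a < top_two_tier x y c].
Proof. by rewrite !inE /= andbA. Qed.

Lemma top_two_ballot_swo A x y : strict_weak_order A (top_two_ballot A x y).
Proof.
split=> [a c|a|a c d aA cA dA|a c d aA cA dA]; rewrite !mem_top_two_ballot.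
- by case/and3P.
- by rewrite ltnn !andbF.
- by rewrite aA cA dA /=; apply: ltn_trans.
- rewrite aA cA dA /= => lt_ad.
  by case: (ltnP (top_two_tier x y a) (top_two_tier x y c)) => [|le_ca];
    [left | right; apply: leq_ltn_trans lt_ad].
Qed.

Local Open Scope ring_scope.

Definition ballot_margin b (a c : X) : int :=
  ((a, c) \in b)%:Z - ((c, a) \in b)%:Z.

Lemma ballot_margin_top_two_xy A x y :
  x \in A -> y \in A -> y != x ->
  ballot_margin (top_two_ballot A x y) y x = -1.
Proof.
move=> xA yA yx.
by rewrite /ballot_margin !mem_top_two_ballot xA yA /top_two_tier eqxx (negPf yx) eqxx.
Qed.

Lemma ballot_margin_top_two_yz A x y z :
  y \in A -> z \in A -> y != x -> z != x -> z != y ->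
  ballot_margin (top_two_ballot A x y) y z = 1.
Proof.
move=> yA zA yx zx zy.
by rewrite /ballot_margin !mem_top_two_ballot yA zA /top_two_tier
  eqxx (negPf yx) (negPf zx) (negPf zy).
Qed.

Section AddVoter.
Local Open Scope fmap_scope.
Variables (P : profile X V) (i : V) (b : {fset (X * X)}).
Hypothesis b_swo : strict_weak_order (alts P) b.

Lemma add_voter_nonempty : domf (ballots P).[i <- b] != fset0.
Proof. by apply/fset0Pn; exists i; rewrite dom_setf fset1U1. Qed.

Lemma add_voter_swo j r :
  (ballots P).[i <- b].[? j] = Some r -> strict_weak_order (alts P) r.
Proof. by rewrite fnd_set; case: eqP => _; [case=> <- | apply: ballots_swo]. Qed.

Definition add_voter : profile X V :=
  Profile (alts_nonempty P) add_voter_nonempty add_voter_swo.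

Lemma ballot_add_voter j :
  ballot add_voter j = if j == i then b else ballot P j.
Proof. by rewrite /ballot /= fnd_set; case: eqP. Qed.

Lemma support_add_voter a c : i \notin voters P ->
  Defs.support add_voter a c = (((a, c) \in b) + Defs.support P a c)%N.
Proof.
move=> iP; rewrite /Defs.support.
have voters_add : perm_eq (voters add_voter) (i :: voters P).
  apply: uniq_perm; rewrite /= ?iP ?fset_uniq // => j.
  by rewrite /voters /add_voter /= in_fset1U inE.
rewrite (permP voters_add) /= ballot_add_voter eqxx; congr (_ + _).
apply: eq_in_count => j jP /=; rewrite ballot_add_voter.
by case: eqP jP iP => // -> ->.
Qed.

Lemma margin_add_voter a c : i \notin voters P ->
  margin add_voter a c = margin P a c + ballot_margin b a c.
Proof. by move=> iP; rewrite /margin /ballot_margin !support_add_voter //; lia. Qed.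

Lemma add_voter_ranking_first x : i \notin voters P ->
  (forall y, y \in alts P -> y != x -> (x, y) \in b) ->
  adds_voter_ranking_first P add_voter i x.
Proof. by move=> iP b_first; split; rewrite //= ballot_add_voter eqxx. Qed.

End AddVoter.

Lemma positive_involvement_repeat (F : profile X V -> {fset X}) P x b k :
  infinite_type V -> positive_involvement F ->
  strict_weak_order (alts P) b ->
  (forall y, y \in alts P -> y != x -> (x, y) \in b) -> x \in F P ->
  exists P', [/\ alts P' = alts P, x \in F P' &
    forall a c, margin P' a c = margin P a c + k%:Z * ballot_margin b a c].
Proof.
move=> HV PI b_swo b_first xF; elim: k => [|k [P' [altsP' xF' marginP']]].
  by exists P; split=> // a c; rewrite mul0r addr0.
have [i iP'] := HV (voters P').
have b_swo' : strict_weak_order (alts P') b by rewrite altsP'.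
exists (add_voter i b_swo'); split=> // [|a c].
  by apply: (PI _ _ i _ xF'); apply: add_voter_ranking_first; rewrite ?altsP'.
rewrite margin_add_voter // marginP' -addrA intS mulrDl mul1r.
by rewrite [_ + ballot_margin _ _ _]addrC.
Qed.

Lemma margin_aa P a : margin P a a = 0.
Proof. exact: subrr. Qed.

Lemma margin_anti P a c : margin P a c = - margin P c a.
Proof. by rewrite /margin opprB. Qed.

Lemma margin_linear P a c :
  linear_profile P -> a \in alts P -> c \in alts P -> a != c ->
  margin P a c = (size (voters P))%:Z - 2 * (Defs.support P c a)%:Z.
Proof.
move=> linP aA cA ac.
suff -> : size (voters P) = (Defs.support P a c + Defs.support P c a)%N.
  by rewrite /margin; lia.
rewrite /Defs.support -count_predUI.
rewrite [count (predI _ _) _](@eq_in_count _ _ pred0) => [|j /linP [[_ irr trans _] _]].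
  rewrite count_pred0 addn0 -[LHS]count_predT; apply: eq_in_count => j /linP [_ total].
  by case: (total a c aA cA ac) => /= ->; rewrite ?orbT.
by apply/negP => /andP[ac_j ca_j]; move: (irr a); rewrite (trans a c a).
Qed.

Lemma voting_method_alts (F : profile X V -> {fset X}) P x :
  voting_method F -> x \in F P -> x \in alts P.
Proof. by move=> /(_ P) [/fsubsetP FP _] /FP. Qed.

Lemma not_defensible_witness P x : x \in alts P -> ~ defensible P x ->
  exists y, [/\ y \in alts P, y != x, 0 < margin P y x &
    forall z, z \in alts P -> margin P z y < margin P y x].
Proof.
move=> xA undef.
have [y [yA no_z]] : exists y, y \in alts P /\
    ~ exists2 z, z \in alts P & margin P y x <= margin P z y.
  apply: NNPP => none; apply: undef; split=> // y yA.
  by apply: NNPP => no_z; apply: none; exists y.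
have beat z : z \in alts P -> margin P z y < margin P y x.
  by move=> zA; rewrite ltNge; apply/negP => le_m; apply: no_z; exists z.
have m_pos : 0 < margin P y x by rewrite -(margin_aa P y) beat.
exists y; split=> //; apply: contraTneq m_pos => ->.
by rewrite margin_aa.
Qed.

Lemma shrink_defeat (F : profile X V -> {fset X}) P x y :
  infinite_type V -> positive_involvement F -> x \in F P ->
  x \in alts P -> y \in alts P -> y != x -> 0 < margin P y x ->
  exists P', [/\ alts P' = alts P, x \in F P', margin P' y x = 1 &
    forall z, z \in alts P -> z != x -> z != y ->
      margin P' y z = margin P y x - 1 - margin P z y].
Proof.
move=> HV PI xF xA yA yx m_pos.
have x_first z : z \in alts P -> z != x -> (x, z) \in top_two_ballot (alts P) x y.
  move=> zA zx; rewrite mem_top_two_ballot xA zA /top_two_tier eqxx (negPf zx).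
  by case: ifP.
have [P' [altsP' xF' marginP']] := positive_involvement_repeat `|margin P y x - 1|%N
  HV PI (top_two_ballot_swo _ x y) x_first xF.
exists P'; split=> // [|z zA zx zy].
  by rewrite marginP' ballot_margin_top_two_xy //; lia.
rewrite marginP' ballot_margin_top_two_yz // (margin_anti P y z); lia.
Qed.

End Voting.

Theorem lemma1 (X V : choiceType) (HX : infinite_type X) (HV : infinite_type V) :
  (forall F : profile X V -> {fset X},
     voting_method F -> positive_involvement F -> condorcet_winner_criterion F ->
     forall P, linear_profile P -> forall x, x \in F P -> defensible P x)
  /\
  (forall F : profile X V -> {fset X},
     voting_method F -> positive_involvement F -> weak_condorcet_winner_criterion F ->
     forall P, forall x, x \in F P -> defensible P x).
Proof.
split=> F VM PI CW P => [linP|] x xF; have xA := voting_method_alts VM xF;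
  apply: NNPP => /(not_defensible_witness xA) [y [yA yx m_pos beat]];
  have [P' [altsP' xF' yx1 yz]] := shrink_defeat HV PI xF xA yA yx m_pos.
- have y_cw : condorcet_winner P' y.
    split=> [|z]; rewrite altsP' // => zA zy.
    have [->|zx] := eqVneq z x; first by rewrite yx1.
    have := beat z zA; rewrite yz // !margin_linear //; lia.
  by move: xF'; rewrite (CW _ _ y_cw) => /fset1P xy; rewrite xy eqxx in yx.
- have y_wcw : weak_condorcet_winner P' y.
    split=> [|z]; rewrite altsP' // => zA zy.
    have [->|zx] := eqVneq z x; first by rewrite yx1.
    by have := beat z zA; rewrite yz //; lia.
  have [_ /(_ y)] := CW _ (ex_intro _ y y_wcw) x xF'.
  by rewrite altsP' margin_anti yx1 => /(_ yA yx).
Qed.
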